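(* A reaction network $\mathcal R$ is essential if and only if for all $x,x'\in\mathbb{N}_0^n$: if $x$ leads to $x'$ via $\mathcal R$, then $x'$ leads to $x$ via $\mathcal R$.
   Context: A reaction network (RN) is a (possibly infinite) subset $\mathcal R\subseteq\mathbb{N}_0^n\times\mathbb{N}_0^n$ containing no element $(y,y')$ with $y=y'$; elements $(y,y')$ are reactions $y\to y'$. For $r_1=(y_1,y_1'),\ r_2=(y_2,y_2')$ define $r_1\oplus r_2=(y_1+0\vee(y_2-y_1'),\ y_2'+0\vee(y_1'-y_2))$ ($\vee$ componentwise maximum); it is associative. For $A\subseteq\mathbb{N}_0^n\times\mathbb{N}_0^n$, $\mathrm{cl}(A)$ is the set of all finite $\oplus$-sums of elements of $A$, including the empty sum $(0,0)$. For $r=(y,y')$, $r^{-1}=(y',y)$. A set $A$ is reversible if $r\in A$ implies $r^{-1}\in A$, and $A$ is essential if $\mathrm{cl}(A)$ is reversible. An ordered sequence of reactions $y_1\to y_1',\dots,y_m\to y_m'$ is active on $x\in\mathbb{N}_0^n$ if $x+\sum_{i=1}^{k-1}(y_i'-y_i)\ge y_k$ (componentwise) for all $k$. A state $x$ leads to $x'$ via $\mathcal R$ if there is an ordered sequence of $m\ge0$ reactions of $\mathcal R$ (repetitions allowed) active on $x$ with $x'=x+\sum_{i=1}^m(y_i'-y_i)$. *)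

From mathcomp Require Import all_boot all_order all_algebra.
Set Implicit Arguments. Unset Strict Implicit. Unset Printing Implicit Defensive.
Import GRing.Theory Num.Theory.

Definition state (n : nat) := {ffun 'I_n -> nat}.
Definition reaction (n : nat) := (state n * state n)%type.

Definition is_RN (n : nat) (R : reaction n -> Prop) : Prop :=
  forall r, R r -> r.1 <> r.2.

(* r1 (+) r2 = (y1 + 0 \/ (y2 - y1'), y2' + 0 \/ (y1' - y2));
   on naturals, 0 \/ (a - b) is exactly truncated subtraction a - b. *)
Definition oplus (n : nat) (r1 r2 : reaction n) : reaction n :=
  ([ffun i => r1.1 i + maxn 0 (r2.1 i - r1.2 i)],
   [ffun i => r2.2 i + maxn 0 (r1.2 i - r2.1 i)]).

Definition zero_reaction (n : nat) : reaction n := ([ffun => 0], [ffun => 0]).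

Definition cl (n : nat) (A : reaction n -> Prop) : reaction n -> Prop :=
  fun r => exists s : seq (reaction n),
    (forall a, a \in s -> A a) /\ r = foldr (@oplus n) (zero_reaction n) s.

Definition rinv (n : nat) (r : reaction n) : reaction n := (r.2, r.1).

Definition reversible (n : nat) (A : reaction n -> Prop) : Prop :=
  forall r, A r -> A (rinv r).

Definition essential (n : nat) (A : reaction n -> Prop) : Prop :=
  reversible (cl A).

Definition net_change (n : nat) (s : seq (reaction n)) (k : nat) (i : 'I_n) : int :=
  (\sum_(j < k) (Posz ((nth (zero_reaction n) s j).2 i)
                 - Posz ((nth (zero_reaction n) s j).1 i)))%R.

Definition active (n : nat) (s : seq (reaction n)) (x : state n) : Prop :=
  forall k, (k < size s)%N -> forall i : 'I_n,
    (Posz ((nth (zero_reaction n) s k).1 i) <= Posz (x i) + net_change s k i)%R.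

Definition leads_to (n : nat) (R : reaction n -> Prop) (x x' : state n) : Prop :=
  exists s : seq (reaction n),
    (forall r, r \in s -> R r) /\ active s x /\
    forall i : 'I_n, Posz (x' i) = (Posz (x i) + net_change s (size s) i)%R.

From mathcomp Require Import all_boot all_order all_algebra.
From mathcomp Require Import zify.

Set Implicit Arguments.
Unset Strict Implicit.

(* The sum r = y -> y' of a sequence s of reactions under (+) records exactly
   what firing s requires and produces: s is active on x iff y <= x, and the
   net change of s is y' - y.  Hence x leads to x' via R iff some r in cl(R)
   satisfies r.1 <= x and x' = x - r.1 + r.2 (lemma [leads_toP]).
   - If cl(R) is reversible and x leads to x' through r, then r^-1 in cl(R)
     witnesses that x' leads to x.
   - Conversely, every r in cl(R) leads from r.1 to r.2, so by hypothesis some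
     t in cl(R) leads from r.2 back to r.1; then t (+) r (+) t = r^-1
     (lemma [oplus_sandwich]) and this sum lies in cl(R) because cl(R) is
     closed under (+) (lemma [cl_oplus]). *)

Section ReactionSums.

Variable n : nat.

Local Notation F s := (foldr (@oplus n) (zero_reaction n) s).

Lemma oplusA : associative (@oplus n).
Proof.
move=> [a b] [c d] [e f]; rewrite /oplus /=; congr pair; apply/ffunP=> i;
by rewrite !ffunE /=; lia.
Qed.

Lemma oplus0l (r : reaction n) : oplus (zero_reaction n) r = r.
Proof.
by case: r => a b; rewrite /oplus /=; congr pair; apply/ffunP=> i; rewrite !ffunE /=; lia.
Qed.

Lemma foldr_oplus (s : seq (reaction n)) r : foldr (@oplus n) r s = oplus (F s) r.
Proof. by elim: s => [|a s IH] /=; rewrite ?oplus0l // IH oplusA. Qed.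

Lemma cl_oplus (A : reaction n -> Prop) r1 r2 :
  cl A r1 -> cl A r2 -> cl A (oplus r1 r2).
Proof.
move=> [s1 [As1 ->]] [s2 [As2 ->]]; exists (s1 ++ s2); split.
  by move=> a; rewrite mem_cat => /orP[/As1|/As2].
by rewrite foldr_cat [RHS]foldr_oplus.
Qed.

Lemma net_change0 (s : seq (reaction n)) i : net_change s 0 i = 0%R.
Proof. by rewrite /net_change big_ord0. Qed.

Lemma net_change_cons (r : reaction n) s k i :
  net_change (r :: s) k.+1 i = (Posz (r.2 i) - Posz (r.1 i) + net_change s k i)%R.
Proof. by rewrite /net_change big_ord_recl. Qed.

Lemma activeP (s : seq (reaction n)) x :
  active s x <-> forall i, (F s).1 i <= x i.
Proof.
elim: s x => [|r s IH] x; first by split=> // _ k; rewrite /= ?ffunE /= ?ltn0.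
(* after firing r, the remaining sequence runs on the state x - r.1 + r.2 *)
set x' := [ffun i => x i + r.2 i - r.1 i].
have Fcons i : (F (r :: s)).1 i = r.1 i + ((F s).1 i - r.2 i) by rewrite ffunE max0n.
split=> [act | fits].
- have r_fits i : r.1 i <= x i.
    by have := act 0 isT i; rewrite net_change0 /=; lia.
  have /IH tail_fits : active s x'.
    move=> k Hk i; have := act k.+1 Hk i; rewrite /= net_change_cons ffunE.
    by have := r_fits i; lia.
  by move=> i; rewrite Fcons; have := tail_fits i; have := r_fits i; rewrite ffunE; lia.
- have r_fits i : r.1 i <= x i by have := fits i; rewrite Fcons; lia.
  have tail_act : active s x'.
    by apply/IH => i; rewrite ffunE; have := fits i; rewrite Fcons; lia.
  move=> [|k] Hk i /=; first by rewrite net_change0; have := r_fits i; lia.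
  by rewrite net_change_cons; have := tail_act k Hk i; rewrite ffunE; have := r_fits i; lia.
Qed.

Lemma net_change_sum (s : seq (reaction n)) i :
  net_change s (size s) i = (Posz ((F s).2 i) - Posz ((F s).1 i))%R.
Proof.
elim: s => [|r s IH] /=; first by rewrite net_change0 !ffunE.
by rewrite net_change_cons IH !ffunE; lia.
Qed.

Lemma leads_toP (R : reaction n -> Prop) x x' :
  leads_to R x x' <->
  exists r, [/\ cl R r, forall i, r.1 i <= x i & forall i, x' i + r.1 i = x i + r.2 i].
Proof.
split=> [[s [Rs [act reach]]] | [r [[s [Rs ->]] fits reach]]].
- exists (F s); split; first by exists s.
    exact/activeP.
  by move=> i; have := reach i; have := (activeP s x).1 act i;
     rewrite net_change_sum; lia.
- exists s; split=> //; split; first exact/activeP.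
  by move=> i; rewrite net_change_sum; have := reach i; lia.
Qed.

Lemma oplus_sandwich (r t : reaction n) :
  (forall i, t.1 i <= r.2 i) -> (forall i, r.1 i + t.1 i = r.2 i + t.2 i) ->
  oplus t (oplus r t) = rinv r.
Proof.
move=> fits back; rewrite /oplus /rinv /=; congr pair; apply/ffunP=> i;
by rewrite !ffunE /=; have := fits i; have := back i; lia.
Qed.

End ReactionSums.

Theorem proposition3p6 (n : nat) (R : reaction n -> Prop) :
  is_RN R ->
  (essential R <->
   forall x x' : state n, leads_to R x x' -> leads_to R x' x).
Proof.
(* the argument never uses that reactions are non-trivial *)
move=> _; split=> [ess x x' | rev r clr].
-
  move/leads_toP=> [r [clr fits reach]]; apply/leads_toP.
  exists (rinv r); split=> [|i|i] /=; first exact: ess.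
  + by have := fits i; have := reach i; lia.
  + by have := reach i; lia.
- (* r leads r.1 to r.2, so something in cl R leads r.2 back to r.1 *)
  have /rev/leads_toP [t [clt fits back]] : leads_to R r.1 r.2.
    by apply/leads_toP; exists r; split=> // i; rewrite addnC.
  rewrite -(oplus_sandwich fits); last by move=> i; rewrite -back addnC.
  by apply: cl_oplus => //; apply: cl_oplus.
Qed.
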